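(* Let $n\ge1$, $d\ge0$, and let $\mathcal B_{n,d}$ be the set of directed multigraphs with output pair $H=(V,E,(a,b))$, up to isomorphism, with $|V|\le\min\{n,2+2d\}$, $|E|\le d$, and no isolated node in $V\setminus\{a,b\}$. Then $\{Q_H: H\in\mathcal B_{n,d}\}$ is a basis of the space of $S_n$-equivariant polynomial maps $\mathbb R^{n\times n}\to\mathbb R^{n\times n}$ of degree at most $d$. Moreover, for every such $H$, $Q_H(X)=\sum_{g\in S_n} g\cdot M_H(g^{-1}\cdot X)$, where $M_H(X)=\delta^{a,b}\prod_{(r,s)\in E}X_{r,s}$ (here $H$ is viewed as having node set contained in $[n]$ and $\delta^{a,b}\in\mathbb R^{n\times n}$ is the matrix unit with a $1$ in entry $(a,b)$).
   Context: A directed multigraph with output pair is $H=(V,E,(a,b))$ with $V=[m]$, $E$ a finite multiset of ordered pairs $(r,s)\in V\times V$ (parallel edges and self-loops allowed), and $a,b\in V$ a distinguished, not necessarily distinct, pair (the red edge, not an element of $E$). A node is isolated if no edge of $E$ is incident to it. Isomorphism of such multigraphs: a bijection of node sets carrying the edge multiset onto the edge multiset and $(a,b)$ onto the red pair. For $X\in\mathbb R^{n\times n}$, $Q_H(X)_{i_a,i_b}=\sum_{j}\prod_{(r,s)\in E}X_{j_r,j_s}$, where the sum is over all injective maps $j:[m]\to[n]$ with $j_a=i_a$, $j_b=i_b$ (product with multiplicity; empty product $=1$); if $a=b$ the off-diagonal entries of $Q_H(X)$ are $0$. $S_n$ acts by $(g\cdot X)_{ij}=X_{g^{-1}(i),g^{-1}(j)}$,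 and a polynomial map $P$ is equivariant if $P(g\cdot X)=g\cdot P(X)$ for all $g\in S_n$. *)

From HB Require Import structures.
From mathcomp Require Import all_boot all_order all_fingroup all_algebra.
From mathcomp Require Import reals.
From mathcomp Require mpoly.
Unset Printing Implicit Defensive.
Import Order.TTheory GRing.Theory Num.Theory.
Local Open Scope ring_scope.

(* A directed multigraph with output pair: nodes 'I_m (i.e. [m]),
   edge multiset E given as a list (order irrelevant), red pair (a,b). *)
Record mgraph := MGraph {
  mg_m : nat;
  mg_E : seq ('I_mg_m * 'I_mg_m);
  mg_a : 'I_mg_m;
  mg_b : 'I_mg_m }.

Definition isolated (H : mgraph) (v : 'I_(mg_m H)) : bool :=
  ~~ has (fun e => (e.1 == v) || (e.2 == v)) (mg_E H).

Definition mg_iso (H H' : mgraph) : Prop :=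
  exists f : 'I_(mg_m H) -> 'I_(mg_m H'),
    bijective f /\
    perm_eq [seq (f e.1, f e.2) | e <- mg_E H] (mg_E H') /\
    f (mg_a H) = mg_a H' /\ f (mg_b H) = mg_b H'.

Definition in_B (n d : nat) (H : mgraph) : Prop :=
  (mg_m H <= minn n (2 + 2 * d))%N /\
  (size (mg_E H) <= d)%N /\
  (forall v : 'I_(mg_m H), v != mg_a H -> v != mg_b H -> ~~ isolated H v).

(* A family hs of representatives of B_{n,d}: exactly one per iso class. *)
Definition is_rep (n d k : nat) (hs : 'I_k -> mgraph) : Prop :=
  (forall i, in_B n d (hs i)) /\
  (forall i j, mg_iso (hs i) (hs j) -> i = j) /\
  (forall H, in_B n d H -> exists i, mg_iso H (hs i)).
Arguments is_rep n d {k} hs.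

Definition QH (R : comNzRingType) (n : nat) (H : mgraph) (X : 'M[R]_n) : 'M[R]_n :=
  \matrix_(i, j)
    \sum_(f : {ffun 'I_(mg_m H) -> 'I_n} |
            [&& injectiveb f, f (mg_a H) == i & f (mg_b H) == j])
      \prod_(e <- mg_E H) X (f e.1) (f e.2).
Arguments QH {R n} H X.

Definition Sact (R : Type) (n : nat) (g : 'S_n) (X : 'M[R]_n) : 'M[R]_n :=
  \matrix_(i, j) X ((g^-1)%g i) ((g^-1)%g j).
Arguments Sact {R n} g X.

Definition MH (R : comNzRingType) (n : nat) (H : mgraph) (hm : (mg_m H <= n)%N)
    (X : 'M[R]_n) : 'M[R]_n :=
  (\prod_(e <- mg_E H) X (widen_ord hm e.1) (widen_ord hm e.2))
    *: delta_mx (widen_ord hm (mg_a H)) (widen_ord hm (mg_b H)).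
Arguments MH {R n H} hm X.

Definition poly_map_deg (R : realType) (n d : nat) (P : 'M[R]_n -> 'M[R]_n) : Prop :=
  exists p : 'I_n -> 'I_n -> mpoly.mpoly (n * n) R,
    forall i j, all (fun m => (mpoly.mdeg m <= d)%N) (mpoly.msupp (p i j)) /\
      forall X, P X i j = mpoly.meval (fun k => mxvec X 0 k) (p i j).
Arguments poly_map_deg {R} n d P.

Definition equivariant (R : Type) (n : nat) (P : 'M[R]_n -> 'M[R]_n) : Prop :=
  forall (g : 'S_n) X, P (Sact g X) = Sact g (P X).
Arguments equivariant {R n} P.

Definition EqPoly (R : realType) (n d : nat) (P : 'M[R]_n -> 'M[R]_n) : Prop :=
  poly_map_deg n d P /\ equivariant P.
Arguments EqPoly {R} n d P.

From HB Require Import structures.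
From mathcomp Require Import all_boot all_order all_fingroup all_algebra.
From mathcomp Require Import reals.
From mathcomp Require Import mpoly.
From mathcomp Require Import zify.
From Stdlib Require Import Classical.
Import Order.TTheory GRing.Theory Num.Theory.
Set Implicit Arguments. Unset Strict Implicit. Unset Printing Implicit Defensive.
Local Open Scope ring_scope.

(* Each permutation g contributes to the average of M_H only through its restriction
   to the nodes of H, and every injection [m] -> [n] is the restriction of exactly
   (n - m)! permutations; this is the orbit-sum formula for Q_H.

   Spanning: an equivariant P equals its S_n-average. Expanding P into monomials writes
   it as a combination of maps M_G, where G is the graph on [n] with one edge (i, j)
   per occurrence of X_ij and with the output entry as red pair; averaging turns M_G
   into Q_G, and discarding the nodes of G that are isolated and not red turns Q_G into
   a multiple of Q_H for some H in B_{n,d}.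

   Independence: entrywise, Q_H is a polynomial whose monomials are the images of H
   under injections [m] -> [n] sending the red pair to the entry. The monomial of the
   canonical embedding of a representative H0 occurs in Q_H0 and in no other Q_H,
   because a monomial determines a graph without isolated non-red nodes up to
   isomorphism. Since R is infinite, a polynomial vanishing everywhere is zero, so a
   vanishing combination of the Q_H has vanishing coefficients. *)

Lemma card_perm_type (T : finType) : #|{perm T}| = #|T|`!.
Proof.
rewrite -cardsT -card_perm; apply: eq_card => g; rewrite !inE.
by apply/esym/subsetP => x; rewrite inE.
Qed.

Section PermRestriction.
Variables (U T : finType) (e : U -> T).
Hypothesis e_inj : injective e.

Definition perm_restr (g : {perm T}) : {ffun U -> T} := [ffun x => g (e x)].

Lemma perm_restr_inj g : injectiveb (perm_restr g).
Proof. by apply/injectiveP => x y; rewrite !ffunE => /perm_inj /e_inj. Qed.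

Lemma card_perm_restr1 : #|[set g | perm_restr g == perm_restr 1]| = (#|T| - #|U|)`!.
Proof.
have -> : [set g | perm_restr g == perm_restr 1] = [set g in perm_on (~: (e @: U))].
  apply/setP => g; rewrite !inE; apply/eqP/idP => [gE | g_on].
    apply/subsetP => y; rewrite !inE; apply: contra => /imsetP[x _ ->].
    by have := congr1 (fun f : {ffun _ -> _} => f x) gE; rewrite /= !ffunE perm1 => ->.
  apply/ffunP => x; rewrite !ffunE perm1; apply/eqP; apply: contraT => gx.
  by have := subsetP g_on (e x); rewrite !inE gx imset_f // => /(_ isT).
by rewrite cardsE card_perm cardsCs setCK card_imset // cardsT.
Qed.

Lemma card_perm_restr_le (f : {ffun U -> T}) :
  (#|[set g | perm_restr g == f]| <= (#|T| - #|U|)`!)%N.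
Proof.
have [-> | [g0]] := set_0Vmem [set g | perm_restr g == f]; first by rewrite cards0.
rewrite inE => /eqP g0E.
have -> : [set g | perm_restr g == f] = ([set g | perm_restr g == perm_restr 1] :* g0)%g.
  apply/setP => g; rewrite mem_rcoset !inE -g0E; apply/eqP/eqP => gE; apply/ffunP => x;
    have := congr1 (fun f : {ffun _ -> _} => f x) gE; rewrite /= !ffunE ?perm1 permM.
  - by move=> ->; rewrite permK.
  - by move=> E; rewrite -[g (e x)](permKV g0) E.
by rewrite card_rcoset card_perm_restr1.
Qed.

(* Every permutation has an injective restriction and each fiber has at most
   (#|T| - #|U|)! elements; since #|T|! = #|T| ^_ #|U| * (#|T| - #|U|)!,
   counting shows that no fiber over an injection can be smaller. *)
Lemma card_perm_restr (f : {ffun U -> T}) :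
  injectiveb f -> #|[set g | perm_restr g == f]| = (#|T| - #|U|)`!.
Proof.
move=> f_inj; apply/eqP; rewrite eqn_leq card_perm_restr_le /=; apply: contraT.
rewrite -ltnNge => lt_f.
have : (\sum_(h : {ffun U -> T} | injectiveb h) #|[set g | perm_restr g == h]|
        < \sum_(h : {ffun U -> T} | injectiveb h) (#|T| - #|U|)`!)%N.
  rewrite (bigD1 f) //= [X in (_ < X)%N](bigD1 f) //= -addSn leq_add //.
  by apply: leq_sum => h _; apply: card_perm_restr_le.
have -> : (\sum_(h : {ffun U -> T} | injectiveb h) #|[set g | perm_restr g == h]|)%N
          = #|T|`!.
  rewrite -card_perm_type -sum1_card.
  rewrite [RHS](partition_big perm_restr (fun h : {ffun U -> T} => injectiveb h)) /=;
    last by move=> g _; apply: perm_restr_inj.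
  by apply: eq_bigr => h _; rewrite -sum1_card; apply: eq_bigl => g; rewrite inE.
rewrite sum_nat_const.
have -> : #|[pred h : {ffun U -> T} | injectiveb h]| = #|[set h : {ffun U -> T} | injectiveb h]|.
  by apply: eq_card => h; rewrite !inE.
by rewrite card_inj_ffuns ffact_fact ?ltnn // (leq_card e).
Qed.

Lemma sum_perm_restr (R : nzSemiRingType) (F : {ffun U -> T} -> R) :
  \sum_(g : {perm T}) F (perm_restr g)
  = (#|T| - #|U|)`!%:R * \sum_(f : {ffun U -> T} | injectiveb f) F f.
Proof.
rewrite (partition_big perm_restr (fun f : {ffun U -> T} => injectiveb f)) /=;
  last by move=> g _; apply: perm_restr_inj.
rewrite mulr_sumr; apply: eq_bigr => f f_inj.
rewrite (eq_bigr (fun _ => F f)) => [|g /eqP -> //].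
rewrite sumr_const -(card_perm_restr f_inj) mulr_natl.
by congr (_ *+ _); apply: eq_card => g; rewrite inE.
Qed.

End PermRestriction.

Lemma Sact_sum (V : nmodType) n (g : 'S_n) (I : Type) (r : seq I) (P : pred I)
    (F : I -> 'M[V]_n) :
  Sact g (\sum_(t <- r | P t) F t) = \sum_(t <- r | P t) Sact g (F t).
Proof.
by apply/matrixP => i j; rewrite !mxE !summxE; apply: eq_bigr => t _; rewrite mxE.
Qed.

Lemma SactZ (R : nzRingType) n (g : 'S_n) (a : R) (A : 'M[R]_n) :
  Sact g (a *: A) = a *: Sact g A.
Proof. by apply/matrixP => i j; rewrite !mxE. Qed.

Lemma SactKV (T : Type) n (g : 'S_n) (A : 'M[T]_n) : Sact g (Sact g^-1 A) = A.
Proof. by apply/matrixP => i j; rewrite !mxE invgK !permKV. Qed.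

Lemma QH_E (R : comNzRingType) n (H : mgraph) (X : 'M[R]_n) i j :
  QH H X i j = \sum_(f : {ffun 'I_(mg_m H) -> 'I_n} | injectiveb f)
      ((f (mg_a H) == i) && (f (mg_b H) == j))%:R * \prod_(e <- mg_E H) X (f e.1) (f e.2).
Proof.
rewrite mxE big_mkcondr /=; apply: eq_bigr => f _.
by case: ifP; rewrite ?mul1r ?mul0r.
Qed.

Lemma widen_ord_inj m n (le_mn : (m <= n)%N) : injective (widen_ord le_mn).
Proof. by move=> x y /(congr1 val) xy; apply: val_inj. Qed.
Arguments widen_ord_inj {m n} le_mn.

(* Conjugating M_H by g keeps only the restriction of g to the nodes of H. *)
Lemma QH_orbit_sum (R : comNzRingType) n (H : mgraph) (hm : (mg_m H <= n)%N)
    (X : 'M[R]_n) :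
  (n - mg_m H)`!%:R *: QH H X = \sum_(g : 'S_n) Sact g (MH hm (Sact g^-1 X)).
Proof.
apply/matrixP => i j; rewrite summxE mxE QH_E.
have := sum_perm_restr (widen_ord_inj hm) (fun f : {ffun 'I_(mg_m H) -> 'I_n} =>
  ((f (mg_a H) == i) && (f (mg_b H) == j))%:R * \prod_(e <- mg_E H) X (f e.1) (f e.2)).
rewrite !card_ord => <-; apply: eq_bigr => g _.
rewrite !mxE !ffunE mulrC; congr (_ * _).
  by apply: eq_bigr => e _; rewrite !mxE !ffunE invgK.
have perm_invE (k y : 'I_n) : (g^-1%g k == y) = (g y == k).
  by apply/eqP/eqP => <-; rewrite ?permKV ?permK.
by rewrite !perm_invE.
Qed.

Lemma mg_iso_refl H : mg_iso H H.
Proof.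
exists id; split; first exact: (Bijective (g := id)).
by split=> //; rewrite (@eq_map _ _ _ id) ?map_id // => -[].
Qed.

Lemma mg_iso_sym H H' : mg_iso H H' -> mg_iso H' H.
Proof.
case=> f [[g fK gK] [pE [fa fb]]].
exists g; split; first exact: (Bijective gK fK).
split; last by rewrite -fa -fb !fK.
rewrite perm_sym; have := perm_map (fun e => (g e.1, g e.2)) pE.
by rewrite -map_comp (@eq_map _ _ _ id) ?map_id // => -[x y] /=; rewrite !fK.
Qed.

Lemma QH_iso (R : comNzRingType) n H H' (X : 'M[R]_n) :
  mg_iso H H' -> QH H X = QH H' X.
Proof.
case=> f [[g fK gK] [pE [fa fb]]]; apply/matrixP => i j; rewrite !mxE.
pose pull (h : {ffun 'I_(mg_m H') -> 'I_n}) : {ffun 'I_(mg_m H) -> 'I_n} :=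
  [ffun x => h (f x)].
have pull_bij : bijective pull.
  exists (fun h : {ffun 'I_(mg_m H) -> 'I_n} => [ffun y => h (g y)]) => h;
    by apply/ffunP => x; rewrite !ffunE ?fK ?gK.
rewrite (reindex pull (onW_bij _ pull_bij)); apply: eq_big => h /=.
  rewrite !ffunE fa fb; congr (_ && _); apply/injectiveP/injectiveP => h_inj x y.
    move=> hxy; rewrite -(gK x) -(gK y); congr f.
    by apply: h_inj; rewrite !ffunE !gK.
  by rewrite !ffunE => /h_inj /(congr1 g); rewrite !fK.
by move=> _; rewrite -(perm_big _ pE) big_map; apply: eq_bigr => e _; rewrite !ffunE.
Qed.

Section Compression.
Variables (n : nat) (E : seq ('I_n * 'I_n)) (a b : 'I_n).

Definition mg_nodes : seq 'I_n := [:: a, b & flatten [seq [:: e.1; e.2] | e <- E]].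
Definition mg_support : {set 'I_n} := [set x in mg_nodes].

Lemma mem_support_a : a \in mg_support.
Proof. by rewrite inE mem_head. Qed.

Lemma mem_support_b : b \in mg_support.
Proof. by rewrite inE !in_cons eqxx orbT. Qed.

Lemma mem_support_edge e : e \in E -> (e.1 \in mg_support) && (e.2 \in mg_support).
Proof.
move=> eE; have mem_flat x : x \in flatten [seq [:: e.1; e.2] | e <- E] -> x \in mg_support.
  by move=> xE; rewrite inE !in_cons xE !orbT.
by rewrite !mem_flat //; apply/flatten_mapP; exists e; rewrite // !inE eqxx ?orbT.
Qed.

Let rank := enum_rank_in mem_support_a.

Definition mg_compress : mgraph :=
  MGraph #|mg_support| [seq (rank e.1, rank e.2) | e <- E] (rank a) (rank b).

(* Both sides are rewritten as sums over S_n: the left one as a sum over injections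
   [n] -> [n], i.e. over permutations, the right one by restricting to the support. *)
Lemma QH_compress (R : comNzRingType) (X : 'M[R]_n) :
  QH (MGraph n E a b) X = (n - #|mg_support|)`!%:R *: QH mg_compress X.
Proof.
apply/matrixP => i j; rewrite [RHS]mxE !QH_E /=.
have := sum_perm_restr (@inj_id 'I_n) (fun f : {ffun 'I_n -> 'I_n} =>
  ((f a == i) && (f b == j))%:R * \prod_(e <- E) X (f e.1) (f e.2)).
rewrite subnn fact0 mul1r => <-.
have := sum_perm_restr (@enum_val_inj _ mg_support)
  (fun f : {ffun 'I_#|mg_support| -> 'I_n} => ((f (rank a) == i) && (f (rank b) == j))%:R *
     \prod_(e <- [seq (rank e.1, rank e.2) | e <- E]) X (f e.1) (f e.2)).
rewrite !card_ord => <-; apply: eq_bigr => g _.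
rewrite !ffunE /= !enum_rankK_in ?mem_support_a ?mem_support_b //.
congr (_ * _); rewrite big_map; apply: eq_big_seq => e /mem_support_edge /andP[e1 e2].
by rewrite !ffunE !enum_rankK_in.
Qed.

Lemma size_mg_nodes : size mg_nodes = (2 + 2 * size E)%N.
Proof. by rewrite /mg_nodes /=; congr _.+2; elim: E => //= e s ->; lia. Qed.

Lemma mg_compress_in_B d : (size E <= d)%N -> in_B n d mg_compress.
Proof.
move=> sE; split; [|split].
- rewrite /= leq_min; apply/andP; split.
    by have := max_card (mem mg_support); rewrite card_ord.
  rewrite cardsE; apply: leq_trans (card_size _) _; rewrite size_mg_nodes; lia.
- by rewrite /= size_map.
- move=> w /= wa wb; rewrite /isolated negbK /=.
  have rankK x : rank (enum_val x) = x by apply: enum_valK_in.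
  have := enum_valP w; rewrite inE !in_cons => /orP[/eqP wa'|/orP[/eqP wb'|]].
  + by move: wa; rewrite -wa' rankK eqxx.
  + by move: wb; rewrite -wb' rankK eqxx.
  case/flatten_mapP => e eE; rewrite !inE => /orP[/eqP we|/eqP we];
    apply/hasP; exists (rank e.1, rank e.2); rewrite ?(map_f _ eE) //=;
    by rewrite -we rankK eqxx ?orbT.
Qed.

End Compression.

Definition mxvec_unindex n (k : 'I_(n * n)) : 'I_n * 'I_n :=
  enum_val (cast_ord (esym (@mxvec_cast n n)) k).

Lemma mxvec_unindexK n (k : 'I_(n * n)) :
  mxvec_index (mxvec_unindex k).1 (mxvec_unindex k).2 = k.
Proof.
by case/mxvec_indexP: k => i j; rewrite /mxvec_unindex /mxvec_index cast_ordK enum_rankK.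
Qed.

Lemma mxvec_indexK n (i j : 'I_n) : mxvec_unindex (mxvec_index i j) = (i, j).
Proof. by rewrite /mxvec_unindex /mxvec_index cast_ordK enum_rankK. Qed.

Lemma mxvec_index_pair_inj n :
  injective (fun e : 'I_n * 'I_n => mxvec_index e.1 e.2).
Proof. by move=> [i j] [i' j'] /(congr1 (@mxvec_unindex n)); rewrite !mxvec_indexK. Qed.

(* The edge list of the graph on [n] whose monomial is mu: the variable of entry
   (i, j) contributes mu (i, j) parallel edges from i to j. *)
Definition mnm_edges n (mu : 'X_{1..n * n}) : seq ('I_n * 'I_n) :=
  flatten [seq nseq (mu k) (mxvec_unindex k) | k <- enum 'I_(n * n)].

Lemma size_mnm_edges n (mu : 'X_{1..n * n}) : size (mnm_edges mu) = mdeg mu.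
Proof.
rewrite /mnm_edges size_flatten /shape -map_comp sumnE big_map mdegE big_enum /=.
by apply: eq_bigr => k _; rewrite size_nseq.
Qed.

Lemma prod_mnm_edges (R : comNzRingType) n (mu : 'X_{1..n * n}) (Y : 'M[R]_n) :
  \prod_(e <- mnm_edges mu) Y e.1 e.2 = \prod_(k < n * n) mxvec Y 0 k ^+ mu k.
Proof.
rewrite /mnm_edges big_flatten big_map big_enum /=; apply: eq_bigr => k _.
rewrite big_nseq iter_mulr mulr1; congr (_ ^+ _).
by rewrite -[X in _ = mxvec Y 0 X](mxvec_unindexK k) mxvecE.
Qed.

Definition mg_mnm n m (E : seq ('I_m * 'I_m)) (f : {ffun 'I_m -> 'I_n}) : 'X_{1..n * n} :=
  (\sum_(e <- E) U_(mxvec_index (f e.1) (f e.2)))%MM.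

Lemma mg_mnmE n m (E : seq ('I_m * 'I_m)) (f : {ffun 'I_m -> 'I_n}) k :
  mg_mnm E f k = count (fun e => mxvec_index (f e.1) (f e.2) == k) E.
Proof.
rewrite /mg_mnm mnm_sumE; elim: E => [|e E IH]; first by rewrite big_nil.
by rewrite big_cons /= mnm1E IH.
Qed.

Lemma mdeg_mg_mnm n m (E : seq ('I_m * 'I_m)) (f : {ffun 'I_m -> 'I_n}) :
  mdeg (mg_mnm E f) = size E.
Proof.
rewrite /mg_mnm mdeg_sum (eq_bigr (fun _ => 1%N)) ?sum1_size // => e _.
by rewrite mdeg1.
Qed.

Lemma meval_mg_mnm (R : comNzRingType) n m (v : 'I_(n * n) -> R)
    (E : seq ('I_m * 'I_m)) (f : {ffun 'I_m -> 'I_n}) :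
  meval v 'X_[mg_mnm E f] = \prod_(e <- E) v (mxvec_index (f e.1) (f e.2)).
Proof.
rewrite /mg_mnm; elim: E => [|e E IH]; first by rewrite !big_nil mpolyX0 meval1.
by rewrite !big_cons mpolyXD mevalM mevalXU IH.
Qed.

Definition QH_mpoly (R : comNzRingType) n (H : mgraph) (i j : 'I_n) : {mpoly R[n * n]} :=
  \sum_(f : {ffun 'I_(mg_m H) -> 'I_n} | [&& injectiveb f, f (mg_a H) == i & f (mg_b H) == j])
    'X_[mg_mnm (mg_E H) f].

Lemma QH_meval (R : comNzRingType) n H (X : 'M[R]_n) i j :
  QH H X i j = meval (fun k => mxvec X 0 k) (QH_mpoly R H i j).
Proof.
rewrite mxE /QH_mpoly (big_morph _ (mevalD _) (meval0 _)); apply: eq_bigr => f _.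
by rewrite meval_mg_mnm; apply: eq_bigr => e _; rewrite mxvecE.
Qed.

Lemma mdeg_QH_mpoly (R : comNzRingType) n H (i j : 'I_n) :
  all (fun mu => mdeg mu == size (mg_E H)) (msupp (QH_mpoly R H i j)).
Proof.
apply/allP => mu /msupp_sum_le /flatten_mapP [f _]; rewrite msuppX inE => /eqP ->.
by rewrite mdeg_mg_mnm.
Qed.

Lemma QH_equivariant (R : comNzRingType) n H : equivariant (@QH R n H).
Proof.
move=> g X; apply/matrixP => i j; rewrite !mxE.
pose shift (f : {ffun 'I_(mg_m H) -> 'I_n}) : {ffun 'I_(mg_m H) -> 'I_n} :=
  [ffun x => g^-1%g (f x)].
have shift_bij : bijective shift.
  exists (fun f : {ffun 'I_(mg_m H) -> 'I_n} => [ffun y => g (f y)]) => f;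
    by apply/ffunP => x; rewrite !ffunE ?permK ?permKV.
rewrite [RHS](reindex shift (onW_bij _ shift_bij)); apply: eq_big => f /=.
  rewrite !ffunE !(inj_eq perm_inj); congr (_ && _).
  apply/injectiveP/injectiveP => f_inj x y.
    by rewrite !ffunE => /perm_inj /f_inj.
  by move=> fxy; apply: f_inj; rewrite !ffunE fxy.
by move=> _; apply: eq_bigr => e _; rewrite !mxE !ffunE.
Qed.

Lemma QH_EqPoly (R : realType) n d H : in_B n d H -> EqPoly n d (@QH R n H).
Proof.
case=> _ [sE _]; split; last exact: QH_equivariant.
exists (QH_mpoly R H) => i j; split; last by move=> X; rewrite QH_meval.
apply/allP => mu mu_supp; have := allP (mdeg_QH_mpoly R H i j) mu mu_supp.
by move/eqP ->.
Qed.

Lemma sum_digits_lt (B N : nat) (a : nat -> nat) :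
  (forall t, t < N -> a t < B)%N -> (\sum_(t < N) a t * B ^ t < B ^ N)%N.
Proof.
elim: N => [|N IH] a_lt; first by rewrite big_ord0 expn0.
rewrite big_ord_recr /= expnSr.
have := IH (fun t tN => a_lt t (ltnW tN)); have := a_lt N (ltnSn N).
by set S := (\sum_(i < N) _)%N; set P := (B ^ N)%N; set x := a N; nia.
Qed.

Lemma sum_digits_inj (B N : nat) (a b : nat -> nat) :
  (forall t, t < N -> a t < B)%N -> (forall t, t < N -> b t < B)%N ->
  (\sum_(t < N) a t * B ^ t)%N = (\sum_(t < N) b t * B ^ t)%N ->
  forall t, (t < N)%N -> a t = b t.
Proof.
elim: N => [//|N IH] a_lt b_lt; rewrite !big_ord_recr /=.
have := sum_digits_lt (fun t tN => a_lt t (ltnW tN)).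
have := sum_digits_lt (fun t tN => b_lt t (ltnW tN)).
set Sa := (\sum_(i < N) a i * _)%N; set Sb := (\sum_(i < N) b i * _)%N.
set P := (B ^ N)%N => Sb_lt Sa_lt E.
have eN : a N = b N by move: E Sa_lt Sb_lt; set x := a N; set y := b N; nia.
have eS : Sa = Sb by move: E; rewrite eN; lia.
move=> t; rewrite ltnS leq_eqVlt => /orP[/eqP -> //|tN].
exact: (IH (fun t tN => a_lt t (ltnW tN)) (fun t tN => b_lt t (ltnW tN)) eS).
Qed.

Lemma poly_vanish_eq0 (R : numDomainType) (q : {poly R}) : (forall x, q.[x] = 0) -> q = 0.
Proof.
move=> q0; apply/eqP; apply: contraT => nz_q.
have := max_poly_roots nz_q (rs := [seq i%:R | i <- iota 0 (size q)]).
rewrite size_map size_iota ltnn; apply.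
  by apply/allP => x /mapP [i _ ->]; rewrite /root q0.
by rewrite map_inj_uniq ?iota_uniq // => i j /eqP; rewrite eqr_nat => /eqP.
Qed.

(* Kronecker substitution x_k := t ^ (B ^ k), with B = msize p, sends distinct
   monomials of p to distinct powers of t. *)
Lemma mpoly_vanish_eq0 (R : numDomainType) N (p : {mpoly R[N]}) :
  (forall v, meval v p = 0) -> p = 0.
Proof.
move=> p0; set B := msize p.
pose ext (mu : 'X_{1..N}) (t : nat) : nat := odflt 0%N (omap mu (insub t)).
have extE mu (i : 'I_N) : ext mu i = mu i by rewrite /ext valK.
pose enc (mu : 'X_{1..N}) := (\sum_(t < N) ext mu t * B ^ t)%N.
have ext_lt mu : mu \in msupp p -> forall t, (t < N)%N -> (ext mu t < B)%N.
  move=> mu_supp t tN; apply: leq_trans (msize_mdeg_lt mu_supp).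
  by rewrite /ext insubT /= mdegE ltnS (bigD1 (Ordinal tN)) //= leq_addr.
have enc_inj mu nu : mu \in msupp p -> nu \in msupp p -> enc mu = enc nu -> mu = nu.
  move=> mu_supp nu_supp E; apply/mnmP => i; rewrite -!extE.
  exact: (sum_digits_inj (ext_lt _ mu_supp) (ext_lt _ nu_supp) E).
pose q : {poly R} := \sum_(mu <- msupp p) p@_mu *: 'X^(enc mu).
have q0 : q = 0.
  apply: poly_vanish_eq0 => t; rewrite -(p0 (fun i => t ^+ (B ^ i))) mevalE horner_sum.
  apply: eq_bigr => mu _; rewrite hornerZ hornerXn; congr (_ * _).
  by rewrite /enc -prodrXr; apply: eq_bigr => i _; rewrite extE mulnC exprM.
apply: msuppnil0; case E: (msupp p) => [|mu0 s] //.
have mu0_supp : mu0 \in msupp p by rewrite E mem_head.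
have := congr1 (fun q : {poly R} => q`_(enc mu0)) q0.
rewrite coef0 coef_sum (bigD1_seq mu0) ?msupp_uniq //= coefZ coefXn eqxx mulr1.
rewrite big_seq_cond big1 ?addr0 => [pmu0|].
  by move: mu0_supp; rewrite mcoeff_msupp pmu0 eqxx.
move=> mu /andP[mu_supp mu_neq]; rewrite coefZ coefXn.
case: eqP => [/esym /enc_inj|]; last by rewrite mulr0.
by move=> /(_ mu_supp mu0_supp) mu_eq; rewrite mu_eq eqxx in mu_neq.
Qed.

Definition no_isolated (H : mgraph) : Prop :=
  forall v : 'I_(mg_m H), v != mg_a H -> v != mg_b H -> ~~ isolated H v.

Section IsoOfMnm.
Variables (n : nat) (H H0 : mgraph) (hm0 : (mg_m H0 <= n)%N).
Variable f : {ffun 'I_(mg_m H) -> 'I_n}.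
Hypotheses (f_inj : injective f) (nH : no_isolated H) (nH0 : no_isolated H0).
Hypotheses (fa : f (mg_a H) = widen_ord hm0 (mg_a H0))
  (fb : f (mg_b H) = widen_ord hm0 (mg_b H0)).
Hypothesis mnm_eq : mg_mnm (mg_E H) f = mg_mnm (mg_E H0) [ffun x => widen_ord hm0 x].

Local Notation emb := (widen_ord hm0).
Let edge_f (e : 'I_(mg_m H) * 'I_(mg_m H)) := (f e.1, f e.2).
Let edge_emb (e : 'I_(mg_m H0) * 'I_(mg_m H0)) := (emb e.1, emb e.2).

Lemma edge_emb_inj : injective edge_emb.
Proof.
move=> [x y] [x' y'] /(congr1 (fun e => (val e.1, val e.2))) /= [xx' yy'].
by congr pair; apply: val_inj.
Qed.

Lemma perm_eq_edge_images : perm_eq (map edge_f (mg_E H)) (map edge_emb (mg_E H0)).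
Proof.
apply: (perm_map_inj (@mxvec_index_pair_inj n)); apply/allP => k _.
have := congr1 (fun mu : 'X_{1..n * n} => mu k) mnm_eq; rewrite /= !mg_mnmE !count_map.
by under [in RHS]eq_count => e do rewrite /= !ffunE; move=> ->.
Qed.

(* Every node of H other than the red pair lies on an edge, and the edges of H
   are mapped by f onto the embedded edges of H0. *)
Lemma f_lt v : (f v < mg_m H0)%N.
Proof.
have [-> | va] := eqVneq v (mg_a H); first by rewrite fa /=.
have [-> | vb] := eqVneq v (mg_b H); first by rewrite fb /=.
have := nH va vb; rewrite negbK => /hasP [e eE ve].
have : edge_f e \in map edge_emb (mg_E H0) by rewrite -(perm_mem perm_eq_edge_images) map_f.
case/mapP => e0 _ e_e0; move: (congr1 fst e_e0) (congr1 snd e_e0) => /= e01 e02.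
by case/orP: ve => /eqP <-; rewrite ?e01 ?e02 /=.
Qed.

Definition node_iso (v : 'I_(mg_m H)) : 'I_(mg_m H0) := insubd (mg_a H0) (val (f v)).

Lemma emb_node_iso v : emb (node_iso v) = f v.
Proof. by apply: val_inj; rewrite /= val_insubd f_lt. Qed.

Lemma node_iso_inj : injective node_iso.
Proof. by move=> x y xy; apply: f_inj; rewrite -!emb_node_iso xy. Qed.

Lemma node_iso_surj u : u \in codom node_iso.
Proof.
have node_isoP v w : f v = emb w -> w \in codom node_iso.
  by move=> fv; apply/codomP; exists v; apply: (widen_ord_inj hm0); rewrite emb_node_iso.
have [-> | ua] := eqVneq u (mg_a H0); first exact: (node_isoP _ _ fa).
have [-> | ub] := eqVneq u (mg_b H0); first exact: (node_isoP _ _ fb).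
have := nH0 ua ub; rewrite negbK => /hasP [e0 e0E ue0].
have : edge_emb e0 \in map edge_f (mg_E H) by rewrite (perm_mem perm_eq_edge_images) map_f.
case/mapP => e _ e_e0; move: (congr1 fst e_e0) (congr1 snd e_e0) => /= e01 e02.
by case/orP: ue0 => /eqP <-;
  [apply: node_isoP _ _ (esym e01) | apply: node_isoP _ _ (esym e02)].
Qed.

Lemma mg_iso_of_mnm : mg_iso H H0.
Proof.
exists node_iso; split.
  apply: inj_card_bij node_iso_inj _; rewrite -(card_codom node_iso_inj).
  by apply: subset_leq_card; apply/subsetP => u _; apply: node_iso_surj.
split; last by split; apply: (widen_ord_inj hm0); rewrite emb_node_iso ?fa ?fb.
apply: (perm_map_inj edge_emb_inj); rewrite -map_comp.
rewrite (@eq_map _ _ _ edge_f) ?perm_eq_edge_images // => e.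
by rewrite /edge_f /edge_emb /= !emb_node_iso.
Qed.

End IsoOfMnm.

Lemma QH_mpoly_lin_eq0 (R : numDomainType) n k (hs : 'I_k -> mgraph) (c : 'I_k -> R) :
  (forall X : 'M[R]_n, \sum_l c l *: QH (hs l) X = 0) ->
  forall i j : 'I_n, \sum_l c l *: QH_mpoly R (hs l) i j = 0.
Proof.
move=> hc i j; apply: mpoly_vanish_eq0 => v.
pose X : 'M[R]_n := vec_mx (\row_k v k).
have vX : v =1 (fun k => mxvec X 0 k) by move=> t; rewrite vec_mxK mxE.
rewrite (big_morph _ (mevalD _) (meval0 _)).
transitivity ((\sum_l c l *: QH (hs l) X) i j); last by rewrite hc mxE.
by rewrite summxE; apply: eq_bigr => l _; rewrite mevalZ (meval_eq _ vX) -QH_meval [RHS]mxE.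
Qed.

Lemma mcoeff_QH_mpoly (R : comNzRingType) n H (i j : 'I_n) mu :
  (QH_mpoly R H i j)@_mu = #|[set f : {ffun 'I_(mg_m H) -> 'I_n} |
     [&& injectiveb f, f (mg_a H) == i, f (mg_b H) == j & mg_mnm (mg_E H) f == mu]]|%:R.
Proof.
rewrite /QH_mpoly (big_morph _ (mcoeffD _) (mcoeff0 _ _)) -sum1_card natr_sum.
rewrite [RHS]big_mkcond [LHS]big_mkcond; apply: eq_bigr => f _; rewrite mcoeffX inE.
by case: (injectiveb f) => //=; case: (f (mg_a H) == i) => //=;
  case: (f (mg_b H) == j) => //=; case: (mg_mnm (mg_E H) f == mu).
Qed.

Section Embedding.
Variables (R : numDomainType) (n : nat) (H0 : mgraph) (hm0 : (mg_m H0 <= n)%N).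

Local Notation emb := (widen_ord hm0).
Definition emb_ffun : {ffun 'I_(mg_m H0) -> 'I_n} := [ffun x => emb x].
Definition emb_mnm : 'X_{1..n * n} := mg_mnm (mg_E H0) emb_ffun.

Lemma mcoeff_QH_mpoly_emb_neq0 :
  (QH_mpoly R H0 (emb (mg_a H0)) (emb (mg_b H0)))@_emb_mnm != 0.
Proof.
rewrite mcoeff_QH_mpoly pnatr_eq0 -lt0n card_gt0; apply/set0Pn; exists emb_ffun.
rewrite !inE !ffunE !eqxx !andbT; apply/injectiveP => x y; rewrite !ffunE.
exact: widen_ord_inj.
Qed.

Lemma mcoeff_QH_mpoly_emb_iso H : no_isolated H -> no_isolated H0 ->
  (QH_mpoly R H (emb (mg_a H0)) (emb (mg_b H0)))@_emb_mnm != 0 -> mg_iso H H0.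
Proof.
move=> nH nH0; rewrite mcoeff_QH_mpoly pnatr_eq0 -lt0n card_gt0 => /set0Pn [f].
rewrite inE => /and4P [/injectiveP f_inj /eqP fa /eqP fb /eqP f_mnm].
exact: (mg_iso_of_mnm f_inj nH nH0 fa fb f_mnm).
Qed.

End Embedding.

(* Compare the coefficients of the monomial of the canonical embedding of hs i. *)
Lemma QH_free (R : numDomainType) n d k (hs : 'I_k -> mgraph) (c : 'I_k -> R) :
  is_rep n d hs -> (forall X : 'M[R]_n, \sum_l c l *: QH (hs l) X = 0) -> forall i, c i = 0.
Proof.
move=> [hB [hinj _]] hc i.
have [le_m _] := hB i; have hm : (mg_m (hs i) <= n)%N := leq_trans le_m (geq_minl _ _).
have := congr1 (mcoeff (emb_mnm hm)) (QH_mpoly_lin_eq0 hc (widen_ord hm (mg_a (hs i)))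
  (widen_ord hm (mg_b (hs i)))).
rewrite mcoeff0 (big_morph _ (mcoeffD _) (mcoeff0 _ _)) (bigD1 i) //= big1 ?addr0.
  rewrite mcoeffZ => /eqP; rewrite mulf_eq0 (negbTE (mcoeff_QH_mpoly_emb_neq0 _ _)) orbF.
  by move/eqP.
move=> l l_neq; rewrite mcoeffZ; apply/eqP; rewrite mulf_eq0; apply/orP; right.
apply: contraR l_neq => /(mcoeff_QH_mpoly_emb_iso (hB l).2.2 (hB i).2.2) /hinj ->.
by rewrite eqxx.
Qed.

Section FunSpan.
Variables (R : nzRingType) (T : Type) (V : lmodType R) (k : nat) (B : 'I_k -> T -> V).

Definition in_span (F : T -> V) : Prop :=
  exists c : 'I_k -> R, forall x, F x = \sum_l c l *: B l x.

Lemma in_span_ext F G : in_span F -> G =1 F -> in_span G.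
Proof. by case=> c Fc GF; exists c => x; rewrite GF Fc. Qed.

Lemma in_span0 : in_span (fun _ => 0).
Proof. by exists (fun _ => 0) => x; rewrite big1 // => l _; rewrite scale0r. Qed.

Lemma in_spanD F G : in_span F -> in_span G -> in_span (fun x => F x + G x).
Proof.
case=> c Fc [c' Gc']; exists (fun l => c l + c' l) => x.
by rewrite Fc Gc' -big_split; apply: eq_bigr => l _; rewrite scalerDl.
Qed.

Lemma in_spanZ a F : in_span F -> in_span (fun x => a *: F x).
Proof.
case=> c Fc; exists (fun l => a * c l) => x.
by rewrite Fc scaler_sumr; apply: eq_bigr => l _; rewrite scalerA.
Qed.

Lemma in_span_sum (I : eqType) (r : seq I) (P : pred I) (F : I -> T -> V) :
  (forall t, t \in r -> in_span (F t)) -> in_span (fun x => \sum_(t <- r | P t) F t x).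
Proof.
elim: r => [|t r IH] Fr; first by apply: in_span_ext in_span0 _ => x; rewrite big_nil.
have {}IH := IH (fun s sr => Fr s (@mem_behead _ (t :: r) s sr)).
case: (boolP (P t)) => Pt; last by apply: in_span_ext IH _ => x; rewrite big_cons (negbTE Pt).
by apply: in_span_ext (in_spanD (Fr t (mem_head _ _)) IH) _ => x; rewrite big_cons Pt.
Qed.

End FunSpan.

Lemma equivariant_average (R : nzRingType) n (P : 'M[R]_n -> 'M[R]_n) (X : 'M[R]_n) :
  equivariant P -> \sum_(g : 'S_n) Sact g (P (Sact g^-1 X)) = n`!%:R *: P X.
Proof.
move=> P_eqv; rewrite (eq_bigr (fun _ => P X)) => [|g _]; last by rewrite P_eqv SactKV.
by rewrite sumr_const card_Sn scaler_nat.
Qed.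

Definition mnm_graph n (u v : 'I_n) (mu : 'X_{1..n * n}) : mgraph :=
  MGraph n (mnm_edges mu) u v.

Lemma mpoly_map_expand (R : comNzRingType) n (p : 'I_n -> 'I_n -> {mpoly R[n * n]})
    (Y : 'M[R]_n) :
  \matrix_(u, v) meval (fun k => mxvec Y 0 k) (p u v)
  = \sum_u \sum_v \sum_(mu <- msupp (p u v))
      (p u v)@_mu *: MH (H := mnm_graph u v mu) (leqnn n) Y.
Proof.
rewrite [LHS]matrix_sum_delta; apply: eq_bigr => u _; apply: eq_bigr => v _.
rewrite mxE mevalE scaler_suml; apply: eq_bigr => mu _.
have widen_id (x : 'I_n) : widen_ord (leqnn n) x = x by apply: val_inj.
rewrite /MH -scalerA -prod_mnm_edges /= !widen_id; congr (_ *: (_ *: _)).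
by apply: eq_bigr => e _; rewrite !widen_id.
Qed.

Section Spanning.
Variables (R : realType) (n d k : nat) (hs : 'I_k -> mgraph).
Hypothesis hrep : is_rep n d hs.

Local Notation in_QH_span := (in_span (fun l => @QH R n (hs l))).

Lemma QH_graph_in_span (E : seq ('I_n * 'I_n)) (u v : 'I_n) :
  (size E <= d)%N -> in_QH_span (QH (MGraph n E u v)).
Proof.
move=> sE; have [_ [_ hcov]] := hrep; have [l iso_l] := hcov _ (mg_compress_in_B u v sE).
exists (fun l' => if l' == l then (n - #|mg_support E u v|)`!%:R else 0) => X.
rewrite (bigD1 l) //= eqxx big1 ?addr0 => [|l' /negbTE ->]; last by rewrite scale0r.
by rewrite -(QH_iso X iso_l) -QH_compress.
Qed.

(* P equals its S_n-average; averaging the expansion of P termwise turns each M_G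
   into Q_G by the orbit-sum formula, since G has all n nodes. *)
Lemma EqPoly_in_span P : EqPoly n d P -> in_QH_span P.
Proof.
case=> [[p hp] P_eqv].
have P_avg X : n`!%:R *: P X = \sum_u \sum_v \sum_(mu <- msupp (p u v))
                                  (p u v)@_mu *: QH (mnm_graph u v mu) X.
  have PE Y : P Y = \matrix_(u, v) meval (fun k => mxvec Y 0 k) (p u v).
    by apply/matrixP => u v; rewrite mxE (proj2 (hp u v)).
  rewrite -(equivariant_average X P_eqv).
  under eq_bigr => g _ do rewrite PE mpoly_map_expand Sact_sum.
  rewrite exchange_big; apply: eq_bigr => u _; under eq_bigr => g _ do rewrite Sact_sum.
  rewrite exchange_big; apply: eq_bigr => v _; under eq_bigr => g _ do rewrite Sact_sum.
  rewrite exchange_big; apply: eq_bigr => mu _; under eq_bigr => g _ do rewrite SactZ.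
  by rewrite -scaler_sumr -QH_orbit_sum /= subnn fact0 scale1r.
have expansion_span : in_QH_span (fun X => \sum_u \sum_v \sum_(mu <- msupp (p u v))
                                   (p u v)@_mu *: QH (mnm_graph u v mu) X).
  apply: in_span_sum => u _; apply: in_span_sum => v _.
  apply: in_span_sum => mu mu_supp; apply: in_spanZ; apply: QH_graph_in_span.
  by rewrite size_mnm_edges; apply: (allP (proj1 (hp u v))).
apply: in_span_ext (in_spanZ (n`!%:R)^-1 (in_span_ext expansion_span P_avg)) _ => X.
by rewrite scalerA mulVf ?scale1r // pnatr_eq0 -lt0n fact_gt0.
Qed.

End Spanning.

Definition mgraph_code (H : mgraph) : {m : nat & (seq ('I_m * 'I_m) * 'I_m * 'I_m)%type} :=
  Tagged (fun m => (seq ('I_m * 'I_m) * 'I_m * 'I_m)%type) (mg_E H, mg_a H, mg_b H).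

Definition mgraph_decode (c : {m : nat & (seq ('I_m * 'I_m) * 'I_m * 'I_m)%type}) : mgraph :=
  MGraph (tag c) (tagged c).1.1 (tagged c).1.2 (tagged c).2.

Lemma mgraph_codeK : cancel mgraph_code mgraph_decode. Proof. by case. Qed.

HB.instance Definition _ := Equality.copy mgraph (can_type mgraph_codeK).

Definition graphs_on (m d : nat) : seq mgraph :=
  flatten [seq [seq MGraph m (tval t) p.1 p.2
                 | t <- enum {: s.-tuple ('I_m * 'I_m)}, p <- enum {: 'I_m * 'I_m}]
          | s <- iota 0 d.+1].

Definition graphs_upto (N d : nat) : seq mgraph :=
  flatten [seq graphs_on m d | m <- iota 0 N.+1].

Lemma mem_graphs_upto N d H :
  (mg_m H <= N)%N -> (size (mg_E H) <= d)%N -> H \in graphs_upto N d.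
Proof.
case: H => m E a b /= le_m le_E; apply/flatten_mapP; exists m; first by rewrite mem_iota.
apply/flatten_mapP; exists (size E); first by rewrite mem_iota.
by apply/allpairsP; exists (in_tuple E, (a, b)); rewrite !mem_enum.
Qed.

Lemma exists_transversal (T : eqType) (P : T -> Prop) (r : T -> T -> Prop) :
  (forall x, r x x) -> (forall x y, r x y -> r y x) -> forall s : seq T,
  exists S : seq T, [/\ uniq S, forall x, x \in S -> P x,
    forall x y, x \in S -> y \in S -> r x y -> x = y &
    forall x, x \in s -> P x -> exists2 y, y \in S & r x y].
Proof.
move=> r_refl r_sym; elim=> [|x0 s [S [S_uniq SP S_inj S_cov]]].
  by exists [::]; split.
have [[Px0 x0_new] | x0_old] :=
  classic (P x0 /\ ~ exists2 y, y \in S & r x0 y); last first.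
  exists S; split=> // x; rewrite inE => /orP[/eqP -> Px0 | /S_cov //].
  by apply: NNPP => x0_new; apply: x0_old.
have x0_notin : x0 \notin S by apply/negP => x0S; apply: x0_new; exists x0.
exists (x0 :: S); split=> [|x|x y|x].
- by rewrite /= x0_notin.
- by rewrite inE => /orP[/eqP -> | /SP].
- rewrite !inE => /orP[/eqP -> | xS] /orP[/eqP -> | yS] // rxy.
  + by case: x0_new; exists y.
  + by case: x0_new; exists x => //; apply: r_sym.
  + exact: S_inj.
- rewrite inE => /orP[/eqP -> _ | /S_cov Sx /Sx [y yS rxy]].
    by exists x0; rewrite ?mem_head.
  by exists y; rewrite // inE yS orbT.
Qed.

(* in_B n d H forces mg_m H <= 2 + 2 d and size (mg_E H) <= d, so finitely many
   candidates suffice. *)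
Lemma exists_is_rep n d : exists (k : nat) (hs : 'I_k -> mgraph), is_rep n d hs.
Proof.
have [S [S_uniq SB S_inj S_cov]] :=
  exists_transversal (in_B n d) mg_iso_refl mg_iso_sym (graphs_upto (2 + 2 * d) d).
exists (size S), (tnth (in_tuple S)); split; [|split].
- by move=> i; apply: SB; apply: mem_tnth.
- move=> i j /(S_inj _ _ (mem_tnth i (in_tuple S)) (mem_tnth j (in_tuple S))).
  by apply: (tuple_uniqP _ _).
- move=> H H_B; have [le_m [le_E _]] := H_B.
  have [y yS iso_Hy] := S_cov H (mem_graphs_upto (leq_trans le_m (geq_minr _ _)) le_E) H_B.
  by have /tnthP [i yi] : y \in in_tuple S := yS; exists i; rewrite -yi.
Qed.

Theorem mainTheorem2 (R : realType) (n d : nat) (hn : (0 < n)%N) :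
  (exists (k : nat) (hs : 'I_k -> mgraph), is_rep n d hs) /\
  (forall (k : nat) (hs : 'I_k -> mgraph), is_rep n d hs ->
     (forall i, EqPoly n d (@QH R n (hs i))) /\
     (forall c : 'I_k -> R,
        (forall X : 'M[R]_n, \sum_i c i *: QH (hs i) X = 0) -> forall i, c i = 0) /\
     (forall P : 'M[R]_n -> 'M[R]_n, EqPoly n d P ->
        exists c : 'I_k -> R, forall X, P X = \sum_i c i *: QH (hs i) X)) /\
  (forall (H : mgraph) (hm : (mg_m H <= n)%N), in_B n d H ->
     forall X : 'M[R]_n,
       (n - mg_m H)`!%:R *: QH H X
       = \sum_(g : 'S_n) Sact g (MH hm (Sact (g^-1)%g X))).
Proof.
split; first exact: exists_is_rep.
split; last by move=> H hm _ X; apply: QH_orbit_sum.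
move=> k hs hrep; split; [|split].
- by move=> i; apply: QH_EqPoly; case: hrep => hB _; apply: hB.
- by move=> c; apply: QH_free hrep.
- by move=> P /(EqPoly_in_span hrep) [c Pc]; exists c.
Qed.
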